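(* Consider periods $t=0,1,\dots,T$ with treatment statuses $D_0=0,D_1,\dots,D_T\in\{0,1\}$ and outcomes $Y_t$, and covariates $X=(X_1,\dots,X_T)$. For $g\in\{1,\dots,T\}$ let $D^g=\mathbf 1\{(D_0,\dots,D_T)=(0,\dots,0,D_g=1,1,\dots,1)\}$ be the indicator of being first treated in period $g$ (and treated thereafter), and $D^0=\mathbf 1\{(D_0,\dots,D_T)=(0,\dots,0)\}$ the indicator of never being treated. Assume $\mathbb E[D^g]>0$ and $\mathbb E[D^0\mid X]>0$ a.s. Let $P^s(X)$, $s=0,\dots,T$, be postulated models for the propensity scores $\mathbb E[D^s\mid X]$, with $P^0(X)>0$, and let $\mu_0^t(X)$ be a postulated model for $\mathbb E[Y_t\mid D^0=1,X]$. Define $$\tau_t^{g,DR}=\frac{1}{\mathbb E[D^g]}\,\mathbb E\!\left[\Big(D^g-\frac{P^g(X)}{P^0(X)}D^0\Big)\big(Y_t-\mu_0^t(X)\big)\right],$$ and $\theta^t_{DIM}(g,x)=\mathbb E[Y_t\mid D^g=1,X=x]-\mathbb E[Y_t\mid D^0=1,X=x]$. If either $P^s(X)=\mathbb E[D^s\mid X]$ a.s. for all $s\in\{0,1,\dots,T\}$, or $\mu_0^t(X)=\mathbb E[Y_t\mid D^0=1,X]$ a.s. (not necessarily both), then $$\tau_t^{g,DR}=\int\theta^t_{DIM}(g,x)\,dF_{X\mid D^g=1}(x),$$ where $F_{X\mid D^g=1}$ is the conditional distribution of $X$ given $D^g=1$.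
   Context: This is the staggered-adoption setting: each unit is either never treated or is first treated in some period $g$ and remains treated afterwards. All expectations involved are assumed to exist and be finite. *)

From HB Require Import structures.
From mathcomp Require Import all_boot all_order all_algebra.
From mathcomp Require Import all_classical all_reals all_analysis.
Set Implicit Arguments. Unset Strict Implicit. Unset Printing Implicit Defensive.
Import Order.TTheory GRing.Theory Num.Theory.
Local Open Scope classical_set_scope.
Local Open Scope ring_scope.

Section Defs.
Context {d d' : measure_display} {Omega : measurableType d}
  {Xsp : measurableType d'} {R : realType}.

(* Cohort indicator over periods 0..T.
   cohort D T 0 w  : never treated, (D_0,...,D_T) = (0,...,0)        (D^0)
   cohort D T g w  (g >= 1) : (D_0,...,D_T) = (0,..,0,D_g = 1,1,..,1) (D^g) *)
Definition cohort (D : nat -> Omega -> bool) (T g : nat) (w : Omega) : bool :=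
  if g == 0%N then all (fun s => ~~ D s w) (iota 0 T.+1)
  else all (fun s => D s w == (g <= s)%N) (iota 0 T.+1).

Lemma measurable_all (l : seq nat) (f : nat -> Omega -> bool) :
  (forall s, measurable [set w | f s w]) ->
  measurable [set w | all (fun s => f s w) l].
Proof.
move=> mf; elim: l => [|a l IH] /=.
  by rewrite (_ : [set _ | true] = setT) //; apply/seteqP; split.
rewrite (_ : [set w | f a w && _] = [set w | f a w] `&` [set w | all (fun s => f s w) l]).
  exact: measurableI.
by apply/seteqP; split => w /= /andP.
Qed.

Lemma measurable_cohort (D : nat -> Omega -> bool) (T g : nat) :
  (forall s, measurable [set w | D s w]) ->
  measurable [set w | cohort D T g w].
Proof.
move=> mD; rewrite /cohort; case: eqP => _; apply: measurable_all => s.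
  rewrite (_ : [set w | ~~ D s w] = ~` [set w | D s w]); first exact: measurableC.
  by apply/seteqP; split => w /=; case: (D s w).
case: (g <= s)%N.
  rewrite (_ : [set w | D s w == true] = [set w | D s w]) //.
  by apply/seteqP; split => w /=; case: (D s w).
rewrite (_ : [set w | D s w == false] = ~` [set w | D s w]); first exact: measurableC.
by apply/seteqP; split => w /=; case: (D s w).
Qed.

(* f (a function of the covariates) is a version of E[Z | X]:
   the Kolmogorov defining property. *)
Definition is_cond_exp (P : probability Omega R) (X : Omega -> Xsp)
    (Z : Omega -> R) (f : Xsp -> R) : Prop :=
  [/\ measurable_fun setT f,
      P.-integrable setT (EFin \o Z),
      P.-integrable setT (EFin \o (f \o X)) &
      forall A, measurable A ->
        (\int[P]_(w in X @^-1` A) (Z w)%:E =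
         \int[P]_(w in X @^-1` A) (f (X w))%:E)%E].

(* f is a version of E[Z | G, X] (conditional expectation given the event G
   and the covariates X): the defining property on the sets G /\ {X in A}. *)
Definition is_cond_exp_given (P : probability Omega R) (X : Omega -> Xsp)
    (G : set Omega) (Z : Omega -> R) (f : Xsp -> R) : Prop :=
  [/\ measurable_fun setT f,
      P.-integrable G (EFin \o Z),
      P.-integrable G (EFin \o (f \o X)) &
      forall A, measurable A ->
        (\int[P]_(w in X @^-1` A `&` G) (Z w)%:E =
         \int[P]_(w in X @^-1` A `&` G) (f (X w))%:E)%E].

Lemma cond_scale_ge0 (P : probability Omega R) (G : set Omega) :
  0 <= (fine (P G))^-1.
Proof. by rewrite invr_ge0 fine_ge0 // measure_ge0. Qed.

(* The conditional distribution F_{X | G} of X given the event G: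
   A |-> P(X in A, G) / P(G), as a measure on the covariate space. *)
Definition cond_law (P : probability Omega R) (X : {mfun Omega >-> Xsp})
    (G : set Omega) (mG : measurable G) : set Xsp -> \bar R :=
  pushforward (mscale (NngNum (cond_scale_ge0 P G)) (mrestr P mG)) X.

End Defs.

From HB Require Import structures.
From mathcomp Require Import all_boot all_order all_algebra.
From mathcomp Require Import all_classical all_reals all_analysis.
From mathcomp Require Import measurable_realfun lra.
Set Implicit Arguments. Unset Strict Implicit. Unset Printing Implicit Defensive.
Import Order.TTheory GRing.Theory Num.Theory.
Local Open Scope classical_set_scope.
Local Open Scope ring_scope.

(* Write c_g, c_0 for the cohort indicators, r = P^g / P^0 and m_g, m_0 for
   the conditional outcome means.  Everything rests on a tower property: if Z
   and F have the same integral over every event {X \in A}, then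
   E[h(X) Z] = E[h(X) F].  For nonnegative weights and h this is a
   simple-function approximation argument; the general case follows by
   splitting into positive and negative parts.  It gives E[c_g Y_t] =
   E[c_g m_g(X)] and E[r(X) c_0 Y_t] = E[r(X) c_0 m_0(X)], so that the
   numerator of tau equals E[c_g (m_g - m_0)(X)] plus the balance term
   E[(c_g - r(X) c_0) (m_0 - mu_0)(X)].  The balance term vanishes when
   mu_0 = m_0 a.s., and also when the propensity models are right, because
   then r(X) E[c_0 | X] = E[c_g | X] a.s.  Integrating against F_{X | D^g = 1}
   is E[c_g . ] / P(D^g = 1), which gives the right-hand side. *)

Section funrposneg_mul.
Variables (T : Type) (R : realDomainType) (c f : T -> R).
Hypothesis c_ge0 : forall x, 0 <= c x.

Lemma ge0_funrposMl : (fun x => c x * f x)^\+ = (fun x => c x * f^\+ x).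
Proof. by apply/funext => x; rewrite /funrpos maxr_pMr// mulr0. Qed.

Lemma ge0_funrnegMl : (fun x => c x * f x)^\- = (fun x => c x * f^\- x).
Proof. by apply/funext => x; rewrite /funrneg -mulrN maxr_pMr// mulr0. Qed.

Lemma ge0_funrposMr : (fun x => f x * c x)^\+ = (fun x => f^\+ x * c x).
Proof. by apply/funext => x; rewrite /funrpos maxr_pMl// mul0r. Qed.

Lemma ge0_funrnegMr : (fun x => f x * c x)^\- = (fun x => f^\- x * c x).
Proof. by apply/funext => x; rewrite /funrneg -mulNr maxr_pMl// mul0r. Qed.

End funrposneg_mul.

Lemma normr_funrpos_le (T : Type) (R : realDomainType) (f : T -> R) x :
  `|f^\+ x| <= `|f x|.
Proof.
by rewrite -[`|f x|]/((Num.norm \o f) x) -funrposDneg ger0_norm// lerDl.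
Qed.

Lemma normr_funrneg_le (T : Type) (R : realDomainType) (f : T -> R) x :
  `|f^\- x| <= `|f x|.
Proof.
by rewrite -[`|f x|]/((Num.norm \o f) x) -funrposDneg ger0_norm// lerDr.
Qed.

Lemma indic_boolE (T : Type) (R : pzRingType) (b : T -> bool) (w : T) :
  \1_[set w | b w] w = (b w)%:R :> R.
Proof. by rewrite indicE mem_setE. Qed.

Lemma measurable_inv (R : realType) : measurable_fun setT (@GRing.inv R).
Proof.
have -> : [set: R] = [set x | x != 0] `|` [set 0].
  by apply/seteqP; split => x // _; case: (eqVneq x 0) => [->|x0]; [right|left].
have open_neq0 := @open_neq R 0.
apply/measurable_funU => //; first exact: open_measurable.
split; last exact: measurable_fun_set1.
apply: open_continuous_measurable_fun => // x /set_mem x0.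
exact: inv_continuous.
Qed.

Section Rintegral_funrposneg.
Context d (T : measurableType d) (R : realType) (mu : {measure set T -> \bar R}).
Variables (D : set T) (mD : measurable D).

Lemma integrableD_EFin (u v : T -> R) :
  mu.-integrable D (EFin \o u) -> mu.-integrable D (EFin \o v) ->
  mu.-integrable D (EFin \o (fun x => u x + v x)).
Proof.
by move=> iu iv; apply: eq_integrable mD _ _ _ (integrableD mD iu iv) => x _.
Qed.

Lemma integrableB_EFin (u v : T -> R) :
  mu.-integrable D (EFin \o u) -> mu.-integrable D (EFin \o v) ->
  mu.-integrable D (EFin \o (fun x => u x - v x)).
Proof.
by move=> iu iv; apply: eq_integrable mD _ _ _ (integrableB mD iu iv) => x _.
Qed.

Lemma Rintegral_eqP (f g : T -> R) :
  mu.-integrable D (EFin \o f) -> mu.-integrable D (EFin \o g) ->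
  (\int[mu]_(x in D) (f x)%:E = \int[mu]_(x in D) (g x)%:E)%E <->
  \int[mu]_(x in D) f x = \int[mu]_(x in D) g x.
Proof.
move=> /(integrable_fin_num mD)/fineK fE /(integrable_fin_num mD)/fineK gE.
by split => [|fg]; [rewrite /Rintegral => ->|rewrite -fE -gE; congr EFin].
Qed.

Lemma Rintegral_eq_funrposneg (u v : T -> R) :
  mu.-integrable D (EFin \o u) -> mu.-integrable D (EFin \o v) ->
  (\int[mu]_(x in D) (u^\+ x + v^\- x)%:E =
   \int[mu]_(x in D) (u^\- x + v^\+ x)%:E)%E <->
  \int[mu]_(x in D) u x = \int[mu]_(x in D) v x.
Proof.
move=> iu iv.
have [iup ium] := (integrable_funrpos mD iu, integrable_funrneg mD iu).
have [ivp ivm] := (integrable_funrpos mD iv, integrable_funrneg mD iv).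
have posneg f : mu.-integrable D (EFin \o f) ->
    \int[mu]_(x in D) f x = \int[mu]_(x in D) f^\+ x - \int[mu]_(x in D) f^\- x.
  move=> i_f; rewrite -RintegralB//;
    [|exact: integrable_funrpos|exact: integrable_funrneg].
  by apply: eq_Rintegral => x _; rewrite -[in LHS](funrposBneg f).
apply: iff_trans (Rintegral_eqP (integrableD_EFin iup ivm)
  (integrableD_EFin ium ivp)) _.
rewrite !RintegralD// (posneg u)// (posneg v)//.
move: (\int[mu]_(x in D) u^\+ x) (\int[mu]_(x in D) u^\- x) => up um.
move: (\int[mu]_(x in D) v^\+ x) (\int[mu]_(x in D) v^\- x) => vp vm.
by split=> ?; lra.
Qed.

End Rintegral_funrposneg.

Section boolr.
Context d (T : measurableType d) (R : realType) (mu : {measure set T -> \bar R}).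
Variables (b : T -> bool) (mb : measurable [set w | b w]).

Lemma measurable_boolr : measurable_fun setT (fun w => (b w)%:R : R).
Proof.
rewrite (_ : (fun w => _) = \1_[set w | b w]); first exact: measurable_indic.
by apply/funext => w; rewrite indic_boolE.
Qed.

Lemma Rintegral_boolr : \int[mu]_w (b w)%:R = fine (mu [set w | b w]).
Proof.
rewrite /Rintegral; under eq_integral do rewrite -indic_boolE.
by rewrite integral_indic// setIT.
Qed.

Lemma integral_setI_boolr (A : set T) (f : T -> R) :
  (\int[mu]_(w in A `&` [set w | b w]) (f w)%:E =
   \int[mu]_(w in A) ((b w)%:R * f w)%:E)%E.
Proof.
rewrite integral_mkcondr; apply: eq_integral => w _.
by rewrite restrict_EFin patch_indic /= mulrC indic_boolE.
Qed.

Lemma integrable_boolr_mul (f : T -> R) :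
  mu.-integrable [set w | b w] (EFin \o f) ->
  mu.-integrable setT (EFin \o (fun w => (b w)%:R * f w)).
Proof.
move=> /(integrable_mkcond _ mb); apply: eq_integrable => // w _.
by rewrite restrict_EFin patch_indic /= mulrC indic_boolE.
Qed.

End boolr.

Lemma integral_preimage d d' (T : measurableType d) (S : measurableType d')
    (R : realType) (mu : {measure set T -> \bar R}) (p : T -> S) (A : set S)
    (f : T -> R) :
  (\int[mu]_(x in p @^-1` A) (f x)%:E = \int[mu]_x (\1_A (p x) * f x)%:E)%E.
Proof.
rewrite integral_mkcond; apply: eq_integral => x _.
by rewrite restrict_EFin patch_indic /= mulrC indicE.
Qed.

Section integral_weighted_comp.
Local Open Scope ereal_scope.
Context d1 d2 d3 (T1 : measurableType d1) (T2 : measurableType d2)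
  (S : measurableType d3) (R : realType).
Variables (mu1 : {measure set T1 -> \bar R}) (mu2 : {measure set T2 -> \bar R}).
Variables (p1 : T1 -> S) (p2 : T2 -> S) (a : T1 -> R) (b : T2 -> R).
Hypotheses (mp1 : measurable_fun setT p1) (mp2 : measurable_fun setT p2).
Hypotheses (ma : measurable_fun setT a) (mb : measurable_fun setT b).
Hypotheses (a_ge0 : forall x, (0 <= a x)%R) (b_ge0 : forall x, (0 <= b x)%R).
Hypothesis eq_ab : forall A, measurable A ->
  \int[mu1]_(x in p1 @^-1` A) (a x)%:E = \int[mu2]_(x in p2 @^-1` A) (b x)%:E.

Import HBNNSimple.

Let integral_nnsfun_comp_weighted d (T : measurableType d)
    (mu : {measure set T -> \bar R}) (p : T -> S) (c : T -> R)
    (f : {nnsfun S >-> R}) :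
  measurable_fun setT p -> measurable_fun setT c -> (forall x, 0 <= c x)%R ->
  \int[mu]_x (f (p x) * c x)%:E =
  (\sum_(k \in range f) k%:E * \int[mu]_(x in p @^-1` (f @^-1` [set k])) (c x)%:E)%E.
Proof.
move=> mp mc c_ge0.
have mfk k : measurable_fun setT (fun x => (\1_(f @^-1` [set k]) (p x) : R)).
  by apply: measurableT_comp mp; apply: measurable_indic; exact: measurable_funPTI.
transitivity (\int[mu]_x \sum_(k \in range f)
    (k%:E * (\1_(f @^-1` [set k]) (p x))%:E * (c x)%:E)).
  apply: eq_integral => x _; rewrite fimfunE EFinM -fsumEFin//.
  by rewrite -ge0_mule_fsuml// => k; exact: nnfun_muleindic_ge0.
rewrite ge0_integral_fsum//; last 2 first.
- by move=> k; apply/measurable_EFinP/measurable_funM => //; exact: measurable_funM.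
- by move=> k x _; rewrite mule_ge0 ?nnfun_muleindic_ge0// lee_fin.
apply: eq_fsbigr => k /[!inE] -[y _ <-].
rewrite integral_preimage -ge0_integralZl_EFin//; last 2 first.
- by move=> x _; rewrite lee_fin mulr_ge0.
- exact/measurable_EFinP/measurable_funM.
by apply: eq_integral => x _; rewrite -!EFinM mulrA.
Qed.

Lemma ge0_integral_weighted_comp (h : S -> R) :
  measurable_fun setT h -> (forall y, 0 <= h y)%R ->
  \int[mu1]_x (h (p1 x) * a x)%:E = \int[mu2]_x (h (p2 x) * b x)%:E.
Proof.
move=> mh h_ge0.
have mEh : measurable_fun setT (EFin \o h) by exact/measurable_EFinP.
pose h_ := nnsfun_approx measurableT mEh.
have approx d (T : measurableType d) (mu : {measure set T -> \bar R})
    (p : T -> S) (c : T -> R) :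
    measurable_fun setT p -> measurable_fun setT c -> (forall x, 0 <= c x)%R ->
    \int[mu]_x (h (p x) * c x)%:E = limn (fun n => \int[mu]_x (h_ n (p x) * c x)%:E).
  move=> mp mc c_ge0; rewrite -monotone_convergence//; last 3 first.
  - by move=> n; apply/measurable_EFinP/measurable_funM => //;
      exact: measurableT_comp.
  - by move=> n x _; rewrite lee_fin mulr_ge0.
  - by move=> x _ m n mn; rewrite lee_fin ler_wpM2r//; exact/lefP/nd_nnsfun_approx.
  apply: eq_integral => x _; apply/esym/cvg_lim => //; rewrite EFinM.
  under eq_fun do rewrite EFinM.
  by apply: cvgeZr => //; apply: cvg_nnsfun_approx => // y _; rewrite lee_fin.
rewrite !approx//; congr (limn _); apply/funext => n.
rewrite !integral_nnsfun_comp_weighted//; apply: eq_fsbigr => k _.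
by rewrite eq_ab//; exact: measurable_funPTI.
Qed.

Lemma integral_weighted_comp (h : S -> R) : measurable_fun setT h ->
  \int[mu1]_x (h (p1 x) * a x)%:E = \int[mu2]_x (h (p2 x) * b x)%:E.
Proof.
move=> mh; rewrite integralE [RHS]integralE.
rewrite -[fun x => (h (p1 x) * a x)%:E]/(EFin \o _).
rewrite -[fun x => (h (p2 x) * b x)%:E]/(EFin \o _).
rewrite !funerpos !funerneg !ge0_funrposMr// !ge0_funrnegMr//.
by rewrite (ge0_integral_weighted_comp (measurable_funrpos mh))
  ?(ge0_integral_weighted_comp (measurable_funrneg mh)).
Qed.

End integral_weighted_comp.

Section Rintegral_comp_mul.
Context d d' (Omega : measurableType d) (Xsp : measurableType d') (R : realType).
Variables (mu : {measure set Omega -> \bar R}) (X : Omega -> Xsp).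
Hypothesis mX : measurable_fun setT X.

Lemma Rintegral_comp_mul_eq_ge0 (u v : Omega -> R) (h : Xsp -> R) :
  measurable_fun setT u -> measurable_fun setT v -> measurable_fun setT h ->
  mu.-integrable setT (EFin \o (fun w => h (X w) * u w)) ->
  mu.-integrable setT (EFin \o (fun w => h (X w) * v w)) ->
  (forall q : Xsp -> R, measurable_fun setT q -> (forall y, 0 <= q y) ->
    mu.-integrable setT (EFin \o (fun w => q (X w) * u w)) ->
    mu.-integrable setT (EFin \o (fun w => q (X w) * v w)) ->
    \int[mu]_w (q (X w) * u w) = \int[mu]_w (q (X w) * v w)) ->
  \int[mu]_w (h (X w) * u w) = \int[mu]_w (h (X w) * v w).
Proof.
move=> mu_ mv mh ihu ihv eq_ge0.
have integrable_le (q : Xsp -> R) (z : Omega -> R) : measurable_fun setT q ->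
    measurable_fun setT z -> (forall y, `|q y| <= `|h y|) ->
    mu.-integrable setT (EFin \o (fun w => h (X w) * z w)) ->
    mu.-integrable setT (EFin \o (fun w => q (X w) * z w)).
  move=> mq mz qh; apply: le_integrable => //.
    exact/measurable_EFinP/measurable_funM/mz/measurableT_comp.
  by move=> w _; rewrite lee_fin !normrM ler_wpM2r.
have [mhp mhn] := (measurable_funrpos mh, measurable_funrneg mh).
have posneg z : measurable_fun setT z ->
    mu.-integrable setT (EFin \o (fun w => h (X w) * z w)) ->
    \int[mu]_w (h (X w) * z w) =
    \int[mu]_w (h^\+ (X w) * z w) - \int[mu]_w (h^\- (X w) * z w).
  move=> mz ihz; rewrite -RintegralB//;
    [|exact: integrable_le mhp mz (normr_funrpos_le h) _|
      exact: integrable_le mhn mz (normr_funrneg_le h) _].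
  by apply: eq_Rintegral => w _; rewrite -mulrBl -[in LHS](funrposBneg h).
rewrite (posneg u)// (posneg v)// (eq_ge0 h^\+)// ?(eq_ge0 h^\-)//;
  by apply: integrable_le => //;
    first [exact: normr_funrpos_le|exact: normr_funrneg_le].
Qed.

(* For q >= 0, apply the weighted transfer to the nonnegative weights
   Z^+ + F^- and Z^- + F^+, which have equal integrals over every X^-1 A. *)
Lemma Rintegral_comp_mul_tower (Z F : Omega -> R) (h : Xsp -> R) :
  mu.-integrable setT (EFin \o Z) -> mu.-integrable setT (EFin \o F) ->
  (forall A, measurable A -> \int[mu]_(w in X @^-1` A) (Z w)%:E =
                            \int[mu]_(w in X @^-1` A) (F w)%:E)%E ->
  measurable_fun setT h ->
  mu.-integrable setT (EFin \o (fun w => h (X w) * Z w)) ->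
  mu.-integrable setT (EFin \o (fun w => h (X w) * F w)) ->
  \int[mu]_w (h (X w) * Z w) = \int[mu]_w (h (X w) * F w).
Proof.
move=> iZ iF eqZF mh ihZ ihF.
have /measurable_EFinP mZ := measurable_int _ iZ.
have /measurable_EFinP mF := measurable_int _ iF.
apply: Rintegral_comp_mul_eq_ge0 => // q mq q_ge0 iqZ iqF.
apply/Rintegral_eq_funrposneg => //.
rewrite !ge0_funrposMl// !ge0_funrnegMl//.
under eq_integral do rewrite -mulrDr; under [RHS]eq_integral do rewrite -mulrDr.
apply: ge0_integral_weighted_comp => //.
- by apply: measurable_funD; [exact: measurable_funrpos|exact: measurable_funrneg].
- by apply: measurable_funD; [exact: measurable_funrneg|exact: measurable_funrpos].
- by move=> w; rewrite addr_ge0.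
- by move=> w; rewrite addr_ge0.
move=> A mA.
have mXA : measurable (X @^-1` A) by rewrite -[_ @^-1` _]setTI; exact: mX.
apply/Rintegral_eq_funrposneg => //; [exact: integrableS iZ|exact: integrableS iF|].
by rewrite /Rintegral eqZF.
Qed.

End Rintegral_comp_mul.

Section cond_exp.
Context d d' (Omega : measurableType d) (Xsp : measurableType d') (R : realType).
Variables (P : probability Omega R) (X : {mfun Omega >-> Xsp}).

(* On B = {f(X) < 0}: \int_B |f(X)| = - \int_B f(X) = - \int_B Z <= 0. *)
Lemma cond_exp_ge0 (Z : Omega -> R) (f : Xsp -> R) :
  is_cond_exp P X Z f -> (forall w, 0 <= Z w) -> {ae P, forall w, 0 <= f (X w)}.
Proof.
case=> mf _ ifX eqZf Z_ge0; set B := X @^-1` (f @^-1` `]-oo, 0[).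
have mfN : measurable (f @^-1` `]-oo, 0[) by rewrite -[_ @^-1` _]setTI; exact: mf.
have mB : measurable B by exact: measurable_funPTI.
have fB w : B w -> f (X w) < 0 by rewrite /B /= in_itv.
have mfX : measurable_fun B (EFin \o (f \o X)).
  exact: measurable_funS (subsetT _) (measurable_int _ ifX).
have : (\int[P]_(w in B) `|(f (X w))%:E| = 0)%E.
  apply/eqP; rewrite eq_le integral_ge0// andbT.
  rewrite (eq_integral (fun w => - (f (X w))%:E)%E); last first.
    by move=> w /[!inE] /fB fw; rewrite abse_EFin ltr0_norm// EFinN.
  rewrite integralN ?integrable_add_def ?(integrableS _ _ (subsetT _) ifX)//.
  by rewrite -eqZf// leeNl oppe0 integral_ge0// => w _; rewrite lee_fin.
move/(ae_eq_integral_abs _ mB mfX); apply: filterS => w fX0.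
by rewrite leNgt; apply/negP => fw; case: (fX0 fw) => /eqP; rewrite lt_eqF.
Qed.

Lemma ge0_integral_comp_mul_cond_exp (Z : Omega -> R) (f q : Xsp -> R) :
  is_cond_exp P X Z f -> (forall w, 0 <= Z w) ->
  measurable_fun setT q -> (forall y, 0 <= q y) ->
  (\int[P]_w (q (X w) * Z w)%:E = \int[P]_w (q (X w) * f (X w))%:E)%E.
Proof.
move=> /[dup] fZ [mf iZ ifX eqZf] Z_ge0 mq q_ge0.
have /measurable_EFinP mZ := measurable_int _ iZ.
have mfX : measurable_fun setT (f \o X) by exact: measurableT_comp.
have mfpX : measurable_fun setT (f^\+ \o X).
  exact: measurableT_comp (measurable_funrpos mf) _.
have fpE : {ae P, forall w, f^\+ (X w) = f (X w)}.
  by apply: filterS (cond_exp_ge0 fZ Z_ge0) => w /max_idPl.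
transitivity (\int[P]_w (q (X w) * f^\+ (X w))%:E)%E.
  apply: ge0_integral_weighted_comp => // A mA; rewrite eqZf//.
  apply: ae_eq_integral; first exact: measurable_funPTI.
  - exact/measurable_EFinP/measurable_funTS.
  - exact/measurable_EFinP/measurable_funTS.
  - by apply: filterS fpE => w fw _; rewrite /= fw.
apply: ae_eq_integral => //.
- exact/measurable_EFinP/measurable_funM/mfpX/measurableT_comp.
- exact/measurable_EFinP/measurable_funM/mfX/measurableT_comp.
- by apply: filterS fpE => w fw _; rewrite /= fw.
Qed.

Section cond_exp_given.
Variables (b : Omega -> bool) (mb : measurable [set w | b w]).

Lemma cond_exp_given_boolr (Z : Omega -> R) (f : Xsp -> R) :
  is_cond_exp_given P X [set w | b w] Z f -> forall A, measurable A ->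
  (\int[P]_(w in X @^-1` A) ((b w)%:R * Z w)%:E =
   \int[P]_(w in X @^-1` A) ((b w)%:R * f (X w))%:E)%E.
Proof. by case=> _ _ _ eqZf A mA; rewrite -!integral_setI_boolr eqZf. Qed.

Lemma Rintegral_cond_exp_given (Z : Omega -> R) (f : Xsp -> R) :
  is_cond_exp_given P X [set w | b w] Z f ->
  \int[P]_w ((b w)%:R * Z w) = \int[P]_w ((b w)%:R * f (X w)).
Proof.
move=> /cond_exp_given_boolr/(_ _ measurableT).
by rewrite preimage_setT /Rintegral => ->.
Qed.

Lemma Rintegral_cond_exp_given_comp_mul (Z : Omega -> R) (f h : Xsp -> R) :
  is_cond_exp_given P X [set w | b w] Z f -> measurable_fun setT h ->
  P.-integrable setT (EFin \o (fun w => h (X w) * (b w)%:R * Z w)) ->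
  P.-integrable setT (EFin \o (fun w => h (X w) * (b w)%:R * f (X w))) ->
  \int[P]_w (h (X w) * (b w)%:R * Z w) = \int[P]_w (h (X w) * (b w)%:R * f (X w)).
Proof.
move=> /[dup] fZ [_ iZ ifX _] mh ihZ ihf.
under eq_Rintegral do rewrite -mulrA; under [RHS]eq_Rintegral do rewrite -mulrA.
apply: (Rintegral_comp_mul_tower (measurable_funP X) _ _
  (cond_exp_given_boolr fZ) mh).
- exact: integrable_boolr_mul.
- exact: integrable_boolr_mul.
- by apply: eq_integrable ihZ => // w _; rewrite /= mulrA.
- by apply: eq_integrable ihf => // w _; rewrite /= mulrA.
Qed.

Lemma integral_cond_law (f : Xsp -> R) : measurable_fun setT f ->
  P.-integrable setT (EFin \o (fun w => (b w)%:R * f (X w))) ->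
  (\int[cond_law P X mb]_x (f x)%:E =
   ((fine (P [set w | b w]))^-1 * \int[P]_w ((b w)%:R * f (X w)))%:E)%E.
Proof.
move=> mf ibf; set c := (fine (P [set w | b w]))^-1.
have c_ge0 : 0 <= c := cond_scale_ge0 P _.
under eq_integral do rewrite -[f _]mulr1.
rewrite (integral_weighted_comp (mu2 := P) (p1 := id) (p2 := X) (a := fun=> 1)
  (b := fun w => c * (b w)%:R))//.
- transitivity (\int[P]_w (c%:E * ((b w)%:R * f (X w))%:E))%E.
    by apply: eq_integral => w _; rewrite -EFinM mulrCA (mulrC (f _)).
  by rewrite integralZl// EFinM fineK// integrable_fin_num.
- exact: measurable_funM (measurable_cst _) (measurable_boolr mb).
- by move=> w; rewrite mulr_ge0.
move=> A mA; rewrite (eq_integral (cst 1%:E))// integral_cst// mul1e.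
have mXA : measurable (X @^-1` A) by exact: measurable_funPTI.
transitivity (\int[P]_(w in X @^-1` A) (c%:E * (\1_[set w | b w] w)%:E))%E.
  rewrite ge0_integralZl_EFin//;
    last exact/measurable_EFinP/measurable_funTS/measurable_indic.
  by rewrite integral_indic// setIC.
by apply: eq_integral => w _; rewrite -EFinM indic_boolE.
Qed.

End cond_exp_given.

End cond_exp.

Section propensity_weighting.
Context d d' (Omega : measurableType d) (Xsp : measurableType d') (R : realType).
Variables (P : probability Omega R) (X : {mfun Omega >-> Xsp}).
Variables (cg c0 : Omega -> R) (eg e0 Pg P0 : Xsp -> R).
Hypotheses (eg_cg : is_cond_exp P X cg eg) (e0_c0 : is_cond_exp P X c0 e0).
Hypotheses (cg_ge0 : forall w, 0 <= cg w) (c0_ge0 : forall w, 0 <= c0 w).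
Hypotheses (mPg : measurable_fun setT Pg) (mP0 : measurable_fun setT P0).
Hypotheses (Pg_eg : {ae P, forall w, Pg (X w) = eg (X w)})
  (P0_e0 : {ae P, forall w, P0 (X w) = e0 (X w)})
  (e0_gt0 : {ae P, forall w, 0 < e0 (X w)}).

Let mr : measurable_fun setT (fun y => Pg y / P0 y).
Proof. exact: measurable_funM mPg (measurableT_comp (@measurable_inv R) mP0). Qed.

Let mcg : measurable_fun setT cg.
Proof. by case: eg_cg => _ /(measurable_int _)/measurable_EFinP. Qed.

Let mc0 : measurable_fun setT c0.
Proof. by case: e0_c0 => _ /(measurable_int _)/measurable_EFinP. Qed.

Lemma ge0_integral_propensity_weighting (q : Xsp -> R) :
  measurable_fun setT q -> (forall y, 0 <= q y) ->
  (\int[P]_w (q (X w) * (Pg (X w) / P0 (X w) * c0 w))%:E =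
   \int[P]_w (q (X w) * cg w)%:E)%E.
Proof.
move=> mq q_ge0; have mX : measurable_fun setT X by [].
have [meg _ _ _] := eg_cg; have [me0 _ _ _] := e0_c0.
have eg_ge0 := cond_exp_ge0 eg_cg cg_ge0.
(* rho is nonnegative everywhere, as the weighted transfer requires, and a.s.
   equal to q Pg / P0 on the values of X. *)
set rho := (fun y => q y * (Pg y / P0 y))^\+.
have mrho : measurable_fun setT rho by exact/measurable_funrpos/measurable_funM.
have rhoE : {ae P, forall w, rho (X w) = q (X w) * (Pg (X w) / P0 (X w))}.
  near=> w; apply/max_idPl; rewrite mulr_ge0// divr_ge0//.
    by rewrite (_ : Pg (X w) = eg (X w)); near: w.
  by rewrite (_ : P0 (X w) = e0 (X w)) ?ltW//; near: w.
have mcomp (f : Xsp -> R) (c : Omega -> R) : measurable_fun setT f ->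
    measurable_fun setT c -> measurable_fun setT (fun w => (f (X w) * c w)%:E).
  by move=> mf mc; exact/measurable_EFinP/measurable_funM/mc/measurableT_comp.
transitivity (\int[P]_w (rho (X w) * c0 w)%:E)%E.
  apply: ae_eq_integral => //; [|exact: mcomp mrho mc0|].
  - apply: mcomp mq _; apply: measurable_funM mc0.
    exact: measurableT_comp mr mX.
  by apply: filterS rhoE => w rhow _; rewrite /= rhow mulrA.
rewrite (ge0_integral_comp_mul_cond_exp e0_c0)//; last exact: funrpos_ge0.
rewrite (ge0_integral_comp_mul_cond_exp eg_cg)//.
apply: ae_eq_integral => //; [exact: mcomp mrho (measurableT_comp me0 _)|
  exact: mcomp mq (measurableT_comp meg _)|].
near=> w => _.
have -> : rho (X w) = q (X w) * (Pg (X w) / P0 (X w)) by near: w.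
have -> : Pg (X w) = eg (X w) by near: w.
have -> : P0 (X w) = e0 (X w) by near: w.
have e0w : 0 < e0 (X w) by near: w.
by rewrite /= -mulrA divfK ?gt_eqF.
Unshelve. all: by end_near.
Qed.

Lemma Rintegral_propensity_weighting (k : Xsp -> R) : measurable_fun setT k ->
  P.-integrable setT (EFin \o (fun w => k (X w) * (Pg (X w) / P0 (X w) * c0 w))) ->
  P.-integrable setT (EFin \o (fun w => k (X w) * cg w)) ->
  \int[P]_w (k (X w) * (Pg (X w) / P0 (X w) * c0 w)) = \int[P]_w (k (X w) * cg w).
Proof.
move=> mk ik0 ikg; apply: (Rintegral_comp_mul_eq_ge0 (measurable_funP X)) => //.
  by apply: measurable_funM mc0; exact: measurableT_comp mr _.
by move=> q mq q_ge0 _ _; rewrite /Rintegral ge0_integral_propensity_weighting.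
Qed.

End propensity_weighting.

Section doubly_robust_decomposition.
Context d (T : measurableType d) (R : realType) (mu : {measure set T -> \bar R}).
Variables (cg wt Y mu0 mg m0 : T -> R).
Let integrable f := mu.-integrable setT (EFin \o f).
Hypotheses (icY : integrable (fun w => cg w * Y w))
  (icmu : integrable (fun w => cg w * mu0 w))
  (icmg : integrable (fun w => cg w * mg w))
  (icm0 : integrable (fun w => cg w * m0 w))
  (iwY : integrable (fun w => wt w * Y w))
  (iwmu : integrable (fun w => wt w * mu0 w))
  (iwm0 : integrable (fun w => wt w * m0 w)).

Lemma Rintegral_doubly_robust_decomposition :
  \int[mu]_w (cg w * Y w) = \int[mu]_w (cg w * mg w) ->
  \int[mu]_w (wt w * Y w) = \int[mu]_w (wt w * m0 w) ->
  \int[mu]_w ((m0 w - mu0 w) * wt w) = \int[mu]_w ((m0 w - mu0 w) * cg w) ->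
  \int[mu]_w ((cg w - wt w) * (Y w - mu0 w)) = \int[mu]_w (cg w * (mg w - m0 w)).
Proof.
have distr (c f g : T -> R) :
    integrable (fun w => c w * f w) -> integrable (fun w => c w * g w) ->
    \int[mu]_w (c w * (f w - g w)) = \int[mu]_w (c w * f w) - \int[mu]_w (c w * g w).
  move=> icf icg; rewrite -RintegralB//.
  by apply: eq_Rintegral => w _; rewrite mulrBr.
have distl (c f g : T -> R) :
    integrable (fun w => c w * f w) -> integrable (fun w => c w * g w) ->
    \int[mu]_w ((f w - g w) * c w) = \int[mu]_w (c w * f w) - \int[mu]_w (c w * g w).
  move=> icf icg; rewrite -distr//.
  by apply: eq_Rintegral => w _; rewrite mulrC.
move=> tower_g tower_0; rewrite (distl wt) ?(distl cg)// (distr cg mg)// => balance.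
transitivity (\int[mu]_w
  ((cg w * Y w - cg w * mu0 w) - (wt w * Y w - wt w * mu0 w))).
  by apply: eq_Rintegral => w _; rewrite mulrBl !mulrBr.
rewrite !RintegralB//; [|exact: integrableB_EFin..].
rewrite tower_g tower_0; move: balance.
move: (\int[mu]_w (cg w * mu0 w)) (\int[mu]_w (cg w * m0 w)) => a b.
by move: (\int[mu]_w (wt w * mu0 w)) (\int[mu]_w (wt w * m0 w)) => a' b'; lra.
Qed.

End doubly_robust_decomposition.

Lemma Rintegral_doubly_robust_balance d d' (Omega : measurableType d)
    (Xsp : measurableType d') (R : realType) (P : probability Omega R)
    (X : {mfun Omega >-> Xsp}) (cg c0 : Omega -> R)
    (eg e0 Pg P0 mu m0 : Xsp -> R) :
  is_cond_exp P X cg eg -> is_cond_exp P X c0 e0 ->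
  (forall w, 0 <= cg w) -> (forall w, 0 <= c0 w) ->
  measurable_fun setT Pg -> measurable_fun setT P0 ->
  measurable_fun setT mu -> measurable_fun setT m0 ->
  {ae P, forall w, 0 < e0 (X w)} ->
  P.-integrable setT (EFin \o (fun w => Pg (X w) / P0 (X w) * c0 w * m0 (X w))) ->
  P.-integrable setT (EFin \o (fun w => Pg (X w) / P0 (X w) * c0 w * mu (X w))) ->
  P.-integrable setT (EFin \o (fun w => cg w * m0 (X w))) ->
  P.-integrable setT (EFin \o (fun w => cg w * mu (X w))) ->
  ({ae P, forall w, Pg (X w) = eg (X w)} /\ {ae P, forall w, P0 (X w) = e0 (X w)})
    \/ {ae P, forall w, mu (X w) = m0 (X w)} ->
  \int[P]_w ((m0 (X w) - mu (X w)) * (Pg (X w) / P0 (X w) * c0 w)) =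
  \int[P]_w ((m0 (X w) - mu (X w)) * cg w).
Proof.
move=> eg_cg e0_c0 cg_ge0 c0_ge0 mPg mP0 mmu mm0 e0_gt0 iwm0 iwmu icm0 icmu.
have mk : measurable_fun setT (fun y => m0 y - mu y) by exact: measurable_funB.
case=> [[Pg_eg P0_e0]|mu_m0].
  apply: (Rintegral_propensity_weighting eg_cg e0_c0 cg_ge0 c0_ge0 mPg mP0
    Pg_eg P0_e0 e0_gt0 mk).
  - apply: eq_integrable (integrableB_EFin measurableT iwm0 iwmu) => // w _.
    by rewrite /= -mulrBr; congr EFin; exact: mulrC.
  - apply: eq_integrable (integrableB_EFin measurableT icm0 icmu) => // w _.
    by rewrite /= -mulrBr; congr EFin; exact: mulrC.
have vanish (c : Omega -> R) : measurable_fun setT c ->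
    \int[P]_w ((m0 (X w) - mu (X w)) * c w) = 0.
  move=> mc; rewrite /Rintegral (ae_eq_integral (cst 0%E)) ?integral0//.
  - exact/measurable_EFinP/measurable_funM/mc/(measurableT_comp mk).
  - by apply: filterS mu_m0 => w muw _; rewrite /= muw subrr mul0r.
have mr : measurable_fun setT (fun y => Pg y / P0 y).
  exact: measurable_funM mPg (measurableT_comp (@measurable_inv R) mP0).
rewrite !vanish//; first by case: eg_cg => _ /(measurable_int _)/measurable_EFinP.
apply: measurable_funM; first exact: measurableT_comp mr _.
by case: e0_c0 => _ /(measurable_int _)/measurable_EFinP.
Qed.

Theorem proposition7 (d d' : measure_display) (Omega : measurableType d)
  (Xsp : measurableType d') (R : realType) (P : probability Omega R)
  (T : nat) (D : nat -> Omega -> bool) (Y : nat -> Omega -> R)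
  (X : {mfun Omega >-> Xsp})
  (mD : forall s, measurable [set w | D s w])
  (g t : nat)
  (Pm : nat -> Xsp -> R) (mu : Xsp -> R)
  (e : nat -> Xsp -> R) (mg m0 : Xsp -> R) :
  (* setting: D_0 = 0, staggered adoption, 1 <= g <= T, 0 <= t <= T *)
  (forall w, D 0%N w = false) ->
  (forall w, exists s, (s <= T)%N /\ cohort D T s w) ->
  (1 <= g <= T)%N -> (t <= T)%N ->
  (* measurability / existence and finiteness of the expectations involved *)
  (forall s, measurable_fun setT (Y s)) ->
  P.-integrable setT (EFin \o Y t) ->
  (forall s, measurable_fun setT (Pm s)) ->
  measurable_fun setT mu ->
  P.-integrable setT (fun w => ((cohort D T g w)%:R * mu (X w))%:E) ->
  P.-integrable setT (fun w =>
     (Pm g (X w) / Pm 0%N (X w) * (cohort D T 0 w)%:R * Y t w)%:E) ->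
  P.-integrable setT (fun w =>
     (Pm g (X w) / Pm 0%N (X w) * (cohort D T 0 w)%:R * mu (X w))%:E) ->
  P.-integrable setT (fun w =>
     (Pm g (X w) / Pm 0%N (X w) * (cohort D T 0 w)%:R * m0 (X w))%:E) ->
  P.-integrable setT (fun w => ((cohort D T g w)%:R * m0 (X w))%:E) ->
  (* e s is (a version of) the propensity score E[D^s | X] *)
  (forall s, (s <= T)%N -> is_cond_exp P X (fun w => (cohort D T s w)%:R) (e s)) ->
  (* mg, m0 are (versions of) E[Y_t | D^g = 1, X], E[Y_t | D^0 = 1, X] *)
  is_cond_exp_given P X [set w | cohort D T g w] (Y t) mg ->
  is_cond_exp_given P X [set w | cohort D T 0 w] (Y t) m0 ->
  (* E[D^g] > 0 and E[D^0 | X] > 0 a.s. *)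
  0 < Rintegral P setT (fun w => (cohort D T g w)%:R) ->
  {ae P, forall w, 0 < e 0%N (X w)} ->
  (* the postulated P^0(X) is positive *)
  (forall w, 0 < Pm 0%N (X w)) ->
  (* double robustness: either all propensity models or the outcome model
     are correctly specified *)
  ((forall s, (s <= T)%N -> {ae P, forall w, Pm s (X w) = e s (X w)}) \/
   {ae P, forall w, mu (X w) = m0 (X w)}) ->
  ((Rintegral P setT (fun w => (cohort D T g w)%:R))^-1 *
   Rintegral P setT (fun w =>
     ((cohort D T g w)%:R - Pm g (X w) / Pm 0%N (X w) * (cohort D T 0 w)%:R)
     * (Y t w - mu (X w))))%:E
  = (\int[cond_law P X (measurable_cohort T g mD)]_x (mg x - m0 x)%:E)%E.
Proof.
move=> _ _ /andP[_ gT] _ _ _ mPm mmu igmu iwY iwmu iwm0 igm0 e_D mg_Y m0_Y _.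
move=> e0_gt0 _ DR.
have [mG mG0] := (measurable_cohort T g mD, measurable_cohort T 0 mD).
have [mmg iYG imgG _] := mg_Y; have [mm0 _ _ _] := m0_Y.
have igmg := integrable_boolr_mul mG imgG.
rewrite integral_cond_law; last 2 first.
- exact: measurable_funB.
- apply: eq_integrable (integrableB_EFin measurableT igmg igm0) => // w _.
  by rewrite /= mulrBr.
rewrite Rintegral_boolr//; congr (_ * _)%:E.
apply: Rintegral_doubly_robust_decomposition => //.
- exact: (integrable_boolr_mul (mu := P) mG iYG).
- exact: Rintegral_cond_exp_given mg_Y.
- have mr : measurable_fun setT (fun y => Pm g y / Pm 0%N y).
    exact: measurable_funM (mPm g) (measurableT_comp (@measurable_inv R) (mPm 0%N)).
  exact: (Rintegral_cond_exp_given_comp_mul mG0 m0_Y mr iwY iwm0).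
apply: (Rintegral_doubly_robust_balance (e_D g gT) (e_D 0%N (leq0n T))) => //.
by case: DR => [ps|]; [left; split; exact: ps|right].
Qed.
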